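(* Let $n\ge 5$. If $x\in\mathrm{Sort}_n(123,321)$, then $\mathrm{ind}_{s_{123,321}(x)}(2)=\mathrm{ind}_{s_{123,321}(x)}(1)-1$, i.e. $2$ immediately precedes $1$ in $s_{123,321}(x)$.
   Context: $\mathrm{ind}_y(a)$ is the position of the value $a$ in $y$. A permutation contains a pattern $p$ if it has a subsequence order-isomorphic to $p$; otherwise it avoids $p$. For a set $T$ of patterns, the map $s_T$ is defined as follows: the entries of the input permutation are read from left to right, with an initially empty stack. At each step, if the input is nonempty and pushing the next input entry onto the stack produces a stack whose contents, read from top to bottom, avoid every pattern in $T$, that entry is pushed; otherwise the top entry of the stack is popped and appended to the output. When the input is exhausted, the remaining stack entries are popped one at a time to the output. Write $s_{\sigma,\tau}=s_{\{\sigma,\tau\}}$ and $s=s_{\{21\}}$ (West's stack-sorting map). $\mathrm{Sort}_n(\sigma,\tau)$ is the set of $x\in S_n$ with $s(s_{\sigma,\tau}(x))=12\cdots n$. *)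

From mathcomp Require Import all_boot.
Set Implicit Arguments. Unset Strict Implicit. Unset Printing Implicit Defensive.

(* Permutations of [1..n] are represented as sequences of naturals (one-line
   notation).  Patterns are also sequences of naturals. *)

Fixpoint subseqs (s : seq nat) : seq (seq nat) :=
  match s with
  | [::] => [:: [::]]
  | a :: s' => let r := subseqs s' in [seq a :: t | t <- r] ++ r
  end.

Definition order_iso (t p : seq nat) : bool :=
  (size t == size p) &&
  all (fun i => all (fun j =>
         (nth 0 t i < nth 0 t j) == (nth 0 p i < nth 0 p j))
       (iota 0 (size p))) (iota 0 (size p)).

Definition contains (s p : seq nat) : bool :=
  has (fun t => order_iso t p) (subseqs s).

Definition avoids_all (T : seq (seq nat)) (s : seq nat) : bool :=
  all (fun p => ~~ contains s p) T.

(* One step of the T-stack-sorting procedure.  State: (input, stack, output);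
   the stack is a list whose head is the top entry; output is accumulated in
   order (left to right). *)
Definition stack_step (T : seq (seq nat))
    (st : seq nat * seq nat * seq nat) : seq nat * seq nat * seq nat :=
  let: (inp, stk, out) := st in
  match inp with
  | [::] => st
  | a :: inp' =>
      if avoids_all T (a :: stk) then (inp', a :: stk, out)
      else match stk with
           | [::] => st
           | b :: stk' => (inp, stk', rcons out b)
           end
  end.

(* The map s_T: while input is nonempty perform steps (at most 2 * size x steps
   are ever needed: each entry is pushed once and popped at most once), then
   pop the remaining stack entries (top first) to the output. *)
Definition sT (T : seq (seq nat)) (x : seq nat) : seq nat :=
  let: (_, stk, out) := iter (2 * size x) (stack_step T) (x, [::], [::]) in
  out ++ stk.

Definition s_pair (sigma tau : seq nat) : seq nat -> seq nat := sT [:: sigma; tau].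

Definition west (x : seq nat) : seq nat := sT [:: [:: 2; 1]] x.

Definition in_Sort (n : nat) (sigma tau : seq nat) (x : seq nat) : Prop :=
  perm_eq x (iota 1 n) /\ west (s_pair sigma tau x) = iota 1 n.

Example west_ex : west [:: 3; 1; 2] = [:: 1; 2; 3]. Proof. by vm_compute. Qed.
Example s_ex : s_pair [:: 1;2;3] [:: 3;2;1] [:: 1;2;3] = [:: 2;3;1]. Proof. by vm_compute. Qed.

From mathcomp Require Import all_boot zify.
Set Implicit Arguments. Unset Strict Implicit. Unset Printing Implicit Defensive.

(* Let y = s_{123,321}(x).  Since s(y) is the identity, y avoids 231.  The
   stack never holds an occurrence of 123 or 321, so the entries below 1 on it
   form a decreasing sequence of length at most 2, and its bottom entry, the
   first entry of x, is only popped at the very end, as the last entry of y.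
   If x starts with 2, then 2 ends y, so the entries larger than 2 must appear
   in y in decreasing order; a case check on the next three entries of x shows
   that two of them do not (this is where n >= 5 is needed).  Otherwise, when
   1 is pushed, 2 is not on the stack (it would be the bottom entry), so it is
   either already output or still to come.  In the latter case 1 stays on the
   stack until 2 is pushed above it: popping 1 would be forced by an entry c
   exceeding the two entries b > d below 1, and b, c, d would then appear in y
   as a 231.  Hence 2 precedes 1 in y, and an entry between them would form a
   231 with 2 and 1. *)

Notation state := (seq nat * seq nat * seq nat)%type.

Definition potential (st : state) : nat :=
  let: (i, s, _) := st in 2 * size i + size s.

Definition contents (st : state) : seq nat :=
  let: (i, s, o) := st in o ++ s ++ i.

Lemma contents_pop c i s o b :
  contents (c :: i, s, rcons o b) = contents (c :: i, b :: s, o).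
Proof. by rewrite /= cat_rcons. Qed.

Lemma perm_contents_push c i s o :
  perm_eq (contents (i, c :: s, o)) (contents (c :: i, s, o)).
Proof. by rewrite /= perm_cat2l -cat1s perm_catCA. Qed.

Lemma mem_subseqs t s : (t \in subseqs s) = subseq t s.
Proof.
elim: s t => [|a s IHs] [|b t] //=; rewrite mem_cat IHs ?sub0seq ?orbT //.
case: eqP => [->|ne_ba]; last first.
  by apply/orP/idP => [[/mapP[? _ []]|]|]; [move/ne_ba | | right].
rewrite (mem_map (fun u v (e : a :: u = a :: v) => congr1 behead e)) IHs.
by apply/orP/idP => [[|/(subseq_trans (subseq_cons t a))]|]; auto.
Qed.

Lemma uniq_stack i s o : uniq (contents (i, s, o)) -> uniq s.
Proof. by rewrite /= !cat_uniq => /and3P[_ _ /andP[]]. Qed.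

Lemma stack_notin_output i s o x :
  uniq (contents (i, s, o)) -> x \in s -> x \notin o.
Proof.
by rewrite /= cat_uniq => /and3P[_ /hasPn os _] xs; apply: os; rewrite mem_cat xs.
Qed.

Lemma index_lt_last (z : nat) y x :
  uniq y -> x \in y -> x != last z y -> index x y < index (last z y) y.
Proof.
case/lastP: y => [//|y l]; rewrite last_rcons rcons_uniq mem_rcons inE => /andP[ly _].
case: eqP => //= _ xy _; rewrite -cats1 !index_cat xy (negbTE ly) /= eqxx addn0.
by rewrite index_mem.
Qed.

Lemma avoids_subseq T s t : subseq t s -> avoids_all T s -> avoids_all T t.
Proof.
move=> ts /allP sT; apply/allP => p /sT; apply: contra => /hasP[u ut up].
by apply/hasP; exists u; rewrite // mem_subseqs (subseq_trans _ ts) -?mem_subseqs.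
Qed.

Section StackMachine.

Variable T : seq (seq nat).

Lemma stack_step_cons c i s o : stack_step T (c :: i, s, o) =
  if avoids_all T (c :: s) then (i, c :: s, o)
  else if s is b :: s' then (c :: i, s', rcons o b) else (c :: i, s, o).
Proof. by []. Qed.

Lemma perm_contents_step st : perm_eq (contents (stack_step T st)) (contents st).
Proof.
case: st => [[[|c i] s] o] //=; case: ifP => _; first exact: perm_contents_push.
by case: s => [|b s] //; rewrite contents_pop.
Qed.

Hypothesis avoids1 : forall a, avoids_all T [:: a].

Definition run (st : state) : seq nat :=
  let: (_, s, o) := iter (potential st) (stack_step T) st in o ++ s.

Lemma potential_step c i s o :
  potential (c :: i, s, o) = (potential (stack_step T (c :: i, s, o))).+1.
Proof.
rewrite stack_step_cons; case: ifP => /= [_|]; first lia.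
by case: s => [|b s] /=; [rewrite avoids1 | lia].
Qed.

Lemma run_nil s o : run ([::], s, o) = o ++ s.
Proof.
rewrite /run; suff -> : forall k, iter k (stack_step T) ([::], s, o) = ([::], s, o) by [].
by elim=> //= k ->.
Qed.

Lemma run_step st : run st = run (stack_step T st).
Proof.
case: st => [[[|c i] s] o] //.
by rewrite [in LHS]/run potential_step iterSr.
Qed.

Lemma sT_run x : sT T x = run (x, [::], [::]).
Proof. by rewrite /sT /run /= addn0. Qed.

Lemma run_push c i s o :
  avoids_all T (c :: s) -> run (c :: i, s, o) = run (i, c :: s, o).
Proof. by move=> cs; rewrite run_step stack_step_cons cs. Qed.

Lemma run_pop c i b s o : ~~ avoids_all T (c :: b :: s) ->
  run (c :: i, b :: s, o) = run (c :: i, s, rcons o b).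
Proof. by move=> /negbTE cbs; rewrite run_step stack_step_cons cbs. Qed.

Lemma stack_ind (P : seq nat -> seq nat -> seq nat -> Prop) :
  (forall s o, P [::] s o) ->
  (forall c i s o, avoids_all T (c :: s) -> P i (c :: s) o -> P (c :: i) s o) ->
  (forall c i b s o, ~~ avoids_all T (c :: b :: s) ->
     P (c :: i) s (rcons o b) -> P (c :: i) (b :: s) o) ->
  forall i s o, P i s o.
Proof.
move=> Pnil Ppush Ppop i s o; have [k] := ubnP (potential (i, s, o)).
elim: k i s o => // k IHk [|c i] s o lt_k; first exact: Pnil.
move: lt_k; rewrite potential_step stack_step_cons ltnS.
case: ifP => [cs|ncs] lt_step; first by apply: Ppush; last exact: IHk.
case: s ncs lt_step => [|b s] ncs lt_step; first by rewrite avoids1 in ncs.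
by apply: Ppop; [rewrite ncs | exact: IHk].
Qed.

Lemma perm_run i s o : perm_eq (run (i, s, o)) (contents (i, s, o)).
Proof.
move: i s o; apply: stack_ind => [s o|c i s o cs|c i b s o cbs].
- by rewrite run_nil /= cats0.
- by rewrite run_push // => /perm_trans; apply; apply: perm_contents_push.
- by rewrite run_pop // contents_pop.
Qed.

Lemma mem_run i s o x : (x \in run (i, s, o)) = (x \in contents (i, s, o)).
Proof. exact: (perm_mem (perm_run i s o) x). Qed.

Lemma uniq_run i s o : uniq (run (i, s, o)) = uniq (contents (i, s, o)).
Proof. exact: perm_uniq (perm_run i s o). Qed.

Lemma run_prefix i s o : exists r, run (i, s, o) = o ++ r.
Proof.
move: i s o; apply: stack_ind => [s o|c i s o cs|c i b s o cbs].
- by exists s; rewrite run_nil.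
- by rewrite run_push.
- by rewrite run_pop // => -[r ->]; exists (b :: r); rewrite cat_rcons.
Qed.

Lemma run_out_before i s o b a : b \in o -> a \notin o ->
  index b (run (i, s, o)) < index a (run (i, s, o)).
Proof.
move=> bo ao; have [r ->] := run_prefix i s o.
by rewrite !index_cat bo (negbTE ao) (leq_trans _ (leq_addr _ _)) ?index_mem.
Qed.

Lemma run_stack_order i s o a b : uniq (run (i, s, o)) -> a \in s ->
  index b s < index a s -> index b (run (i, s, o)) < index a (run (i, s, o)).
Proof.
move: i s o a b; apply: stack_ind => [s o|c i s o cs IH|c i d s o cds IH] a b u as_ ba.
- have bs : b \in s by rewrite -index_mem (ltn_trans ba) ?index_mem.
  move: u; rewrite uniq_run => u.
  rewrite run_nil !index_cat (negbTE (stack_notin_output u as_)).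
  by rewrite (negbTE (stack_notin_output u bs)) ltn_add2l.
- rewrite run_push // in u *.
  have /uniq_stack/andP[cs_ _] : uniq (contents (i, c :: s, o)) by rewrite -uniq_run.
  have bs : b \in s by rewrite -index_mem (ltn_trans ba) ?index_mem.
  apply: IH; rewrite ?inE ?as_ ?orbT //=.
  by rewrite !ifN_eq // ?ltnS //; apply: contraNneq cs_ => ->.
- have u' : uniq (contents (c :: i, d :: s, o)) by rewrite -uniq_run.
  rewrite run_pop // in u *; case: (eqVneq d b) => [<-|db].
    apply: run_out_before; first by rewrite mem_rcons mem_head.
    rewrite mem_rcons inE negb_or (stack_notin_output u' as_) andbT.
    by apply: contraTneq ba => ->; rewrite /= eqxx.
  move: ba as_; rewrite /= inE (negbTE db); case: eqP => // /eqP da.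
  rewrite ltnS eq_sym (negbTE da) => ba as_; exact: IH.
Qed.

Lemma run_push_before c i s o b : avoids_all T (c :: s) ->
  uniq (run (c :: i, s, o)) -> b \in s ->
  index c (run (c :: i, s, o)) < index b (run (c :: i, s, o)).
Proof.
move=> cs; rewrite run_push // => u bs.
have /uniq_stack/andP[cs_ _] : uniq (contents (i, c :: s, o)) by rewrite -uniq_run.
apply: run_stack_order; rewrite //= ?inE ?bs ?orbT //.
by rewrite eqxx ifN_eq //; apply: contraNneq cs_ => ->.
Qed.

Lemma run_pop_before c i b s o : ~~ avoids_all T (c :: b :: s) ->
  uniq (run (c :: i, b :: s, o)) ->
  index b (run (c :: i, b :: s, o)) < index c (run (c :: i, b :: s, o)).
Proof.
move=> cbs; rewrite run_pop // uniq_run => u; apply: run_out_before.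
  by rewrite mem_rcons mem_head.
move: u; rewrite /= cat_uniq => /and3P[_ /hasPn + _].
by apply; rewrite !mem_cat mem_head !orbT.
Qed.

Lemma last_run : (forall a b, avoids_all T [:: a; b]) ->
  forall i s o, s != [::] -> last 0 (run (i, s, o)) = last 0 s.
Proof.
move=> avoids2; apply: stack_ind => [s o|c i s o cs IH|c i b s o cbs IH] s0.
- by rewrite run_nil last_cat; case: s s0.
- by rewrite run_push // IH //; move: s0; clear cs IH; case: s.
- case: s IH cbs {s0} => [|d s] IH cbs; first by rewrite avoids2 in cbs.
  by rewrite run_pop // IH.
Qed.

Definition reachable (st st' : state) : Prop :=
  exists k, st' = iter k (stack_step T) st.

Lemma reachable_ind (P : state -> Prop) st st' :
  (forall st1, P st1 -> P (stack_step T st1)) ->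
  reachable st st' -> P st -> P st'.
Proof. by move=> PT [k ->]; elim: k => //= k IHk /IHk /PT. Qed.

Lemma reachable_step st st' : reachable (stack_step T st) st' -> reachable st st'.
Proof. by case=> k ->; exists k.+1; rewrite iterSr. Qed.

Lemma perm_contents_reachable st st' :
  reachable st st' -> perm_eq (contents st') (contents st).
Proof.
move=> r; apply: (reachable_ind (P := fun st1 => perm_eq (contents st1) _) _ r) => //.
by move=> st1; apply: perm_trans (perm_contents_step _).
Qed.

Lemma run_reachable st st' : reachable st st' -> run st' = run st.
Proof.
move=> r; apply: (reachable_ind (P := fun st1 => run st1 = run st) _ r) => //.
by move=> st1 <-; rewrite -run_step.
Qed.

Lemma reachable_push pre c post s o : exists s' o',
  reachable (pre ++ c :: post, s, o) (c :: post, s', o') /\ avoids_all T (c :: s').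
Proof.
move: pre s o; suff gen : forall i s o pre, i = pre ++ c :: post -> exists s' o',
    reachable (i, s, o) (c :: post, s', o') /\ avoids_all T (c :: s').
  by move=> pre s o; apply: gen.
apply: stack_ind => [s o [] //|c' i s o cs IH|c' i b s o cbs IH] pre.
- case: pre => [[<- <-]|p pre [_ ei]]; first by exists s, o; split => //; exists 0.
  have [s' [o' [r cs']]] := IH _ ei; exists s', o'; split => //.
  by apply: reachable_step; rewrite stack_step_cons cs.
- move=> ei; have [s' [o' [r cs']]] := IH _ ei; exists s', o'; split => //.
  by apply: reachable_step; rewrite stack_step_cons (negbTE cbs).
Qed.

End StackMachine.

Definition avoids231 (y : seq nat) : Prop :=
  forall a b c, a \in y -> index b y < index c y < index a y -> a < b < c -> False.

Lemma avoids231_two_next_to_one y : avoids231 y -> uniq y -> {in y, forall v, 0 < v} ->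
  1 \in y -> index 2 y < index 1 y -> index 2 y + 1 = index 1 y.
Proof.
move=> no231 uy pos y1 lt21; rewrite addn1.
have [lt|gt|//] := ltngtP (index 2 y).+1 (index 1 y); last first.
  by rewrite ltnS leqNgt lt21 in gt.
set u := nth 0 y (index 2 y).+1.
have lt_size : (index 2 y).+1 < size y by rewrite (ltn_trans lt) ?index_mem.
have iu : index u y = (index 2 y).+1 by rewrite index_uniq.
have u_gt0 : 0 < u by apply: pos; rewrite mem_nth.
have u1 : u != 1 by apply: contraTneq lt => u_1; rewrite -iu u_1 ltnn.
have u2 : u != 2 by apply/eqP => u_2; move: iu; rewrite u_2; apply: n_Sn.
exfalso; apply: (no231 1 2 u) => //; first by rewrite iu leqnn.
by rewrite /=; lia.
Qed.

Lemma avoids231_above_last y b c : avoids231 y -> uniq y -> c \in y ->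
  last 0 y < b < c -> index c y <= index b y.
Proof.
move=> no231 uy cy; have yl : last 0 y \in y.
  by case: y cy {no231 uy} => // a t _; apply: mem_last.
move=> /andP[lb bc]; rewrite leqNgt; apply/negP => bc_y.
apply: (no231 (last 0 y) b c); rewrite ?lb ?bc ?bc_y ?index_lt_last //.
by rewrite neq_ltn (ltn_trans lb bc) orbT.
Qed.

Lemma avoids21_pair a b : avoids_all [:: [:: 2; 1]] [:: a; b] = (a <= b).
Proof. by rewrite /avoids_all /contains /order_iso /= !ltnn; case: ltngtP. Qed.

Lemma west_sorted_avoids231 n y : west y = iota 1 n -> avoids231 y.
Proof.
set T := [:: [:: 2; 1]] => wy a b c ay /andP[bc ca] /andP[ab bc'].
have avoids1 v : avoids_all T [:: v] by [].
have py : perm_eq (iota 1 n) y by rewrite -wy /west sT_run; apply: perm_run.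
have uy : uniq y by rewrite -(perm_uniq py) iota_uniq.
have cy : c \in y by rewrite -index_mem (ltn_trans ca) ?index_mem.
move: wy uy bc ca ay py; case/splitPr: cy => pre post wy uy.
have cpre : c \notin pre by move: uy; rewrite cat_uniq /= negb_or => /and3P[_ /andP[]].
rewrite !index_cat (negbTE cpre) /= eqxx addn0.
case: ifP => [bpre _|_]; last by rewrite ltnNge leq_addr.
case: ifP => [apre|apre]; first by rewrite ltnNge ltnW ?index_mem.
have ac : a != c by rewrite neq_ltn (ltn_trans ab bc').
rewrite mem_cat apre /= inE (negbTE ac) /= => _ apost py.
have [s' [o' [r cs']]] := reachable_push avoids1 pre c post [::] [::].
have pc : perm_eq (o' ++ s' ++ c :: post) (pre ++ c :: post).
  exact: perm_contents_reachable r.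
have os_pre : perm_eq (o' ++ s') pre by rewrite -(perm_cat2r (c :: post)) -catA.
(* When c is pushed, the smaller entry b read before it has left the stack. *)
have bo : b \in o'.
  move: bpre; rewrite -(perm_mem os_pre) mem_cat => /orP[//|bs].
  have cbs : subseq [:: c; b] (c :: s') by rewrite /= eqxx sub1seq.
  by have := avoids_subseq cbs cs'; rewrite avoids21_pair leqNgt bc'.
have ao : a \notin o'.
  move: uy; rewrite -(perm_uniq pc) cat_uniq => /and3P[_ /hasPn + _].
  by apply; rewrite !mem_cat inE apost !orbT.
have := run_out_before avoids1 (c :: post) s' bo ao.
rewrite (run_reachable avoids1 r) -sT_run -/(west _) wy.
move=> /(sorted_ltn_index ltn_trans (iota_ltn_sorted 1 n)).
rewrite !(perm_mem py) !mem_cat bpre !inE apost !orbT ltnNge (ltnW ab).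
by move=> /(_ isT isT).
Qed.

Definition mono_patterns : seq (seq nat) := [:: [:: 1; 2; 3]; [:: 3; 2; 1]].

Definition mono3 a b c := (a < b < c) || (c < b < a).

Lemma order_iso123 a b c : order_iso [:: a; b; c] [:: 1; 2; 3] = (a < b < c).
Proof.
rewrite /order_iso /= !ltnn.
by case: (ltngtP a b); case: (ltngtP b c); case: (ltngtP a c); lia.
Qed.

Lemma order_iso321 a b c : order_iso [:: a; b; c] [:: 3; 2; 1] = (c < b < a).
Proof.
rewrite /order_iso /= !ltnn.
by case: (ltngtP a b); case: (ltngtP b c); case: (ltngtP a c); lia.
Qed.

Lemma avoids_mono1 a : avoids_all mono_patterns [:: a].
Proof. by []. Qed.

Lemma avoids_mono2 a b : avoids_all mono_patterns [:: a; b].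
Proof. by []. Qed.

Lemma avoids_mono3 a b c : avoids_all mono_patterns [:: a; b; c] = ~~ mono3 a b c.
Proof.
rewrite /avoids_all /contains /= !order_iso123 !order_iso321 /order_iso /= /mono3.
by case: (a < b < c); case: (c < b < a).
Qed.

Lemma avoids_mono4 a b c d : avoids_all mono_patterns [:: a; b; c; d] =
  ~~ [|| mono3 a b c, mono3 a b d, mono3 a c d | mono3 b c d].
Proof.
rewrite /avoids_all /contains /= !order_iso123 !order_iso321 /order_iso /= /mono3.
by case: (a < b < c); case: (a < b < d); case: (a < c < d); case: (b < c < d);
  case: (c < b < a); case: (d < b < a); case: (d < c < a); case: (d < c < b).
Qed.

Lemma mono_stack_above_min a t : avoids_all mono_patterns (a :: t) -> uniq t ->
  {in t, forall v, a < v} ->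
  t = [::] \/ (exists b, t = [:: b]) \/ (exists b c, t = [:: b; c] /\ c < b).
Proof.
case: t => [|b [|c [|d t]]] avt ut gt_a; [by left | by right; left; exists b | |].
  right; right; exists b, c; split => //.
  have [ab ac] : a < b /\ a < c by split; apply: gt_a; rewrite !inE eqxx ?orbT.
  by move: avt ut; rewrite avoids_mono3 /mono3 /= !inE; lia.
have [ab [ac ad]] : a < b /\ a < c /\ a < d.
  by split; [|split]; apply: gt_a; rewrite !inE eqxx ?orbT.
have /avoids_subseq/(_ avt) : subseq [:: a; b; c; d] [:: a, b, c, d & t].
  by rewrite /= !eqxx sub0seq.
by move: ut; rewrite avoids_mono4 /mono3 /= !inE; lia.
Qed.

Lemma mono_stack_two_bottom s : avoids_all mono_patterns (1 :: s) -> uniq (1 :: s) ->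
  {in s, forall v, 0 < v} -> 2 \in s -> last 0 s = 2.
Proof.
move=> a1s /andP[s1 us] pos s2.
have gt1 : {in s, forall v, 1 < v}.
  move=> v vs; have := pos v vs; have : v != 1 by apply: contraNneq s1 => <-.
  lia.
case: (mono_stack_above_min a1s us gt1) => [e|[[b e]|[b [d [e db]]]]]; subst s.
- by [].
- by move: s2; rewrite inE => /eqP.
have := gt1 d; rewrite !inE eqxx orbT => /(_ isT).
by move: s2 db; rewrite !inE /=; lia.
Qed.

Lemma pop_one_contains231 c i s o :
  let y := run mono_patterns (c :: i, 1 :: s, o) in
  uniq y -> {in y, forall v, 0 < v} ->
  avoids_all mono_patterns (1 :: s) -> ~~ avoids_all mono_patterns [:: c, 1 & s] ->
  ~ avoids231 y.
Proof.
move=> y u pos a1s nc1s no231.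
have mem_y v : v \in contents (c :: i, 1 :: s, o) -> v \in y.
  by rewrite /y (mem_run avoids_mono1).
have c_gt0 : 0 < c by apply/pos/mem_y; rewrite /= !(mem_cat, inE) eqxx !orbT.
have /uniq_stack/andP[s1 us] : uniq (contents (c :: i, 1 :: s, o)).
  by rewrite -(uniq_run avoids_mono1).
have s_gt1 : {in s, forall v, 1 < v}.
  move=> v vs; have v1 : v != 1 by apply: contraNneq s1 => <-.
  have := pos v (mem_y v _); rewrite /= !(mem_cat, inE) vs !orbT => /(_ isT); lia.
case: (mono_stack_above_min a1s us s_gt1) => [es|[[b es]|[b [d [es db]]]]]; subst s.
- by rewrite avoids_mono2 in nc1s.
- have := s_gt1 b (mem_head _ _).
  by move: nc1s; rewrite avoids_mono3 /mono3; lia.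
have [b1 d1] : 1 < b /\ 1 < d by split; apply: s_gt1; rewrite !inE eqxx ?orbT.
have bc : b < c by move: nc1s; rewrite avoids_mono4 /mono3; lia.
have ncbd : ~~ avoids_all mono_patterns [:: c; b; d].
  by rewrite avoids_mono3 negbK /mono3 db bc orbT.
have e1 : y = run mono_patterns (c :: i, [:: b; d], rcons o 1) by rewrite /y run_pop.
have e2 : y = run mono_patterns (c :: i, [:: d], rcons (rcons o 1) b).
  by rewrite e1 run_pop.
have bc_y : index b y < index c y by rewrite e1 run_pop_before -?e1.
have cd_y : index c y < index d y by rewrite e2 run_push_before -?e2 ?mem_head.
apply: (no231 d b c); first by apply: mem_y; rewrite /= !(mem_cat, inE) eqxx !orbT.
  by rewrite bc_y.
by rewrite db.
Qed.

Lemma run_two_before_one_on_stack i s o :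
  let y := run mono_patterns (i, s, o) in
  uniq y -> {in y, forall v, 0 < v} -> avoids231 y ->
  avoids_all mono_patterns s -> 1 \in s -> 2 \in i -> index 2 y < index 1 y.
Proof.
move: i s o; apply: (stack_ind avoids_mono1) => [//|c i s o cs IH|c i b s o cbs IH] y;
  rewrite {}/y.
- move=> u pos no231 _ s1; rewrite inE => /orP[/eqP c2|i2].
    by subst c; apply: run_push_before.
  rewrite run_push // in u pos no231 *; apply: IH => //.
  by rewrite inE s1 orbT.
move=> u pos no231 abs s1 i2; case: (eqVneq b 1) => [b1|nb1].
  by subst b; case: (pop_one_contains231 u pos abs cbs).
rewrite run_pop // in u pos no231 *; apply: IH => //.
  exact: avoids_subseq (subseq_cons s b) abs.
by move: s1; rewrite inE eq_sym (negbTE nb1).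
Qed.

Lemma run_two_before_one_from_bottom a r :
  let y := run mono_patterns (r, [:: a], [::]) in
  uniq y -> {in y, forall v, 0 < v} -> avoids231 y ->
  a != 2 -> 1 \in a :: r -> 2 \in r -> index 2 y < index 1 y.
Proof.
move=> y uy pos no231 a_n2; rewrite inE => /orP[/eqP a1|r1] r2.
  by subst a; apply: run_two_before_one_on_stack; rewrite ?mem_head.
have e0 : y = run mono_patterns (r, [:: a], [::]) by [].
clearbody y; move: e0 r2; case/splitPr: r1 => pre post e0 r2.
have [s' [o' [reach a1s']]] := reachable_push avoids_mono1 pre 1 post [:: a] [::].
have e1 : y = run mono_patterns (1 :: post, s', o').
  by rewrite e0 (run_reachable avoids_mono1 reach).
have uc : uniq (contents (1 :: post, s', o')) by rewrite -(uniq_run avoids_mono1) -e1.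
have : 2 \in contents (1 :: post, s', o').
  by rewrite (perm_mem (perm_contents_reachable reach)) /= inE r2 orbT.
rewrite /= !mem_cat inE /= => /or3P[o2|s2|p2].
- rewrite e1; apply: (run_out_before avoids_mono1) => //.
  move: uc; rewrite cat_uniq => /and3P[_ /hasPn + _].
  by apply; rewrite !mem_cat mem_head !orbT.
- have u1s : uniq (1 :: s').
    by apply: (@uniq_stack post _ o'); rewrite (perm_uniq (perm_contents_push _ _ _ _)).
  have pos_s : {in s', forall v, 0 < v}.
    by move=> v vs; apply: pos; rewrite e1 (mem_run avoids_mono1) /= !mem_cat vs orbT.
  have s_n0 : s' != [::] by apply: contraTneq s2 => ->.
  have := last_run avoids_mono1 avoids_mono2 (1 :: post) o' s_n0.
  rewrite -e1 (mono_stack_two_bottom a1s' u1s pos_s s2) e0.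
  by rewrite (last_run avoids_mono1 avoids_mono2) //= => a_2; rewrite a_2 eqxx in a_n2.
rewrite e1 run_push // in uy pos no231 *.
by apply: run_two_before_one_on_stack; rewrite ?mem_head.
Qed.

Section HeadTwo.

Variables (x2 x3 x4 : nat) (r : seq nat).

Let y := run mono_patterns ([:: x2, x3, x4 & r], [:: 2], [::]).

Hypotheses (uy : uniq y) (pos : {in y, forall v, 0 < v}).

Let mem_y v : v \in [:: x2; x3; x4] -> v \in y.
Proof. by rewrite /y (mem_run avoids_mono1) /= !inE => /or3P[] ->; rewrite ?orbT. Qed.

Let x_pos : [/\ 0 < x2, 0 < x3 & 0 < x4].
Proof. by split; apply/pos/mem_y; rewrite !inE eqxx ?orbT. Qed.

Let x_uniq : uniq [:: 2; x2; x3; x4].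
Proof.
apply: (@subseq_uniq _ _ (contents ([:: x2, x3, x4 & r], [:: 2], [::]))).
  by rewrite /= !eqxx sub0seq.
by rewrite -(uniq_run avoids_mono1).
Qed.

Let no_ascent_above_two b c : avoids231 y ->
  c \in [:: x2; x3; x4] -> 2 < b < c -> index b y < index c y -> False.
Proof.
have y_last : last 0 y = 2 by rewrite /y (last_run avoids_mono1 avoids_mono2).
move=> no231 /mem_y cy; rewrite -{1}y_last => bc.
by rewrite ltnNge (avoids231_above_last no231 uy cy bc).
Qed.

Let y_push : y = run mono_patterns ([:: x3, x4 & r], [:: x2; 2], [::]).
Proof. by rewrite /y run_push. Qed.

Lemma head_two_one_contains231 : x2 = 1 -> ~ avoids231 y.
Proof.
move=> x2_1 /no_ascent_above_two ascent; move: x_uniq; rewrite /= !inE => distinct.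
have [_ x3_gt0 x4_gt0] := x_pos.
have y_push3 : y = run mono_patterns (x4 :: r, [:: x3; x2; 2], [::]).
  by rewrite y_push run_push // avoids_mono3 /mono3; lia.
case: (boolP (avoids_all mono_patterns [:: x4; x3; x2; 2])) => a4.
  apply: (ascent x4 x3); first by rewrite !inE eqxx orbT.
    by move: a4; rewrite avoids_mono4 /mono3; lia.
  by rewrite y_push3 run_push_before ?mem_head -?y_push3.
apply: (ascent x3 x4); first by rewrite !inE eqxx !orbT.
  by move: a4; rewrite avoids_mono4 /mono3; lia.
by rewrite y_push3 run_pop_before -?y_push3.
Qed.

Lemma head_two_large_contains231 : x2 != 1 -> ~ avoids231 y.
Proof.
move=> x2_n1 /no_ascent_above_two ascent; move: x_uniq; rewrite /= !inE => distinct.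
have [x2_gt0 x3_gt0 x4_gt0] := x_pos.
have mem_x2 : x2 \in [:: x2; x3; x4] by rewrite mem_head.
have mem_x3 : x3 \in [:: x2; x3; x4] by rewrite !inE eqxx orbT.
have mem_x4 : x4 \in [:: x2; x3; x4] by rewrite !inE eqxx !orbT.
case: (boolP (avoids_all mono_patterns [:: x3; x2; 2])) => a3; last first.
  apply: (ascent x2 x3 mem_x3); first by move: a3; rewrite avoids_mono3 /mono3; lia.
  by rewrite y_push run_pop_before -?y_push.
have y_push3 : y = run mono_patterns (x4 :: r, [:: x3; x2; 2], [::]).
  by rewrite y_push run_push.
have [x3_1|x3_n1] := eqVneq x3 1; last first.
  apply: (ascent x3 x2 mem_x2); first by move: a3; rewrite avoids_mono3 /mono3; lia.
  by rewrite y_push run_push_before -?y_push ?mem_head.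
case: (boolP (avoids_all mono_patterns [:: x4; x3; x2; 2])) => a4.
  apply: (ascent x4 x2 mem_x2); first by move: a4; rewrite avoids_mono4 /mono3; lia.
  by rewrite y_push3 run_push_before -?y_push3 ?inE ?eqxx ?orbT.
have na3 : ~~ avoids_all mono_patterns [:: x4; x2; 2].
  by move: a4; rewrite avoids_mono4 avoids_mono3 /mono3; lia.
have y_pop : y = run mono_patterns (x4 :: r, [:: x2; 2], [:: x3]).
  by rewrite y_push3 run_pop.
apply: (ascent x2 x4 mem_x4); first by move: na3; rewrite avoids_mono3 /mono3; lia.
by rewrite y_pop run_pop_before -?y_pop.
Qed.

End HeadTwo.

Lemma run_head_two_contains231 r : 3 <= size r ->
  let y := run mono_patterns (r, [:: 2], [::]) in
  uniq y -> {in y, forall v, 0 < v} -> ~ avoids231 y.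
Proof.
case: r => [|x2 [|x3 [|x4 r]]] // _ y uy pos.
have [/head_two_one_contains231|/head_two_large_contains231] := eqVneq x2 1; exact.
Qed.

Lemma run_two_before_one x : 4 <= size x ->
  let y := run mono_patterns (x, [::], [::]) in
  uniq y -> {in y, forall v, 0 < v} -> avoids231 y ->
  1 \in x -> 2 \in x -> index 2 y < index 1 y.
Proof.
case: x => [//|a r] size_r y; rewrite {}/y run_push // => uy pos no231 x1 x2.
have [a2|a_n2] := eqVneq a 2.
  by subst a; case: (run_head_two_contains231 size_r uy pos no231).
apply: run_two_before_one_from_bottom => //.
by move: x2; rewrite inE eq_sym (negbTE a_n2).
Qed.

Unset Implicit Arguments.
Theorem lemma4p5 (n : nat) (x : seq nat) :
  5 <= n ->
  in_Sort n [:: 1; 2; 3] [:: 3; 2; 1] x ->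
  index 2 (s_pair [:: 1; 2; 3] [:: 3; 2; 1] x) + 1 =
  index 1 (s_pair [:: 1; 2; 3] [:: 3; 2; 1] x).
Proof.
move=> n5 [px sorted_y]; have no231 := west_sorted_avoids231 sorted_y.
rewrite /s_pair sT_run in no231 *.
have mem_x v : (v \in x) = (0 < v <= n) by rewrite (perm_mem px) mem_iota; lia.
have uy : uniq (run mono_patterns (x, [::], [::])).
  by rewrite (uniq_run avoids_mono1) /= (perm_uniq px) iota_uniq.
have pos : {in run mono_patterns (x, [::], [::]), forall v, 0 < v}.
  by move=> v; rewrite (mem_run avoids_mono1) /= mem_x => /andP[].
apply: avoids231_two_next_to_one => //.
  by rewrite (mem_run avoids_mono1) /= mem_x; lia.
by apply: run_two_before_one => //; rewrite ?mem_x ?(perm_size px) ?size_iota; lia.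
Qed.
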